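(* For each $i\in\{1,2,3,4\}$ and each $k$ there are complex numbers $\alpha_{m,i}(k)$, $m\in\mathbb Z/D\mathbb Z$, with $$q^{\epsilon_i}(q^{-1}M)^{-ab+p_i}Z^0_k=\sum_{m\in\mathbb Z/D\mathbb Z}\alpha_{m,i}(k)\,\Psi_{2km-ab+p_i},$$ and $\alpha_{0,i}(k)=\alpha_0(k)\,q^{-\frac{a^2+b^2}{D}+\frac D4}$ for all $i$, where $\alpha_0(k)=\langle Z^0_k,\Psi_0\rangle$ is the coefficient of $\Psi_0$ in $Z^0_k$.
   Context: Standing setup. $(E,\omega)$ is a real $2$-dimensional symplectic vector space with a compatible linear complex structure $j$; $K_j=\{\alpha\in E^*\otimes\mathbb C:\alpha(j\cdot)=i\alpha\}$. A half-form line is a complex line $\delta$ with an isomorphism $\varphi:\delta^{\otimes2}\to K_j$; $\delta$ carries the Hermitian metric making $\varphi$ an isometry. For $v\in E\setminus\{0\}$, $\Omega_v$ denotes a vector of $\delta$ with $\varphi(\Omega_v^2)(v)=1$ (unique up to sign). $L\to E$ is the trivial Hermitian line bundle with connection $d-i\alpha$, where $\alpha_x(y)=\frac12\omega(x,y)$, and the compatible holomorphic structure; sections of $L^k\otimes\delta$ are identified with functions $E\to\delta$. For $k\in\mathbb Z_{>0}$ and $x\in E$, $T^*_x$ acts on sections of $L^k\otimes\delta$ by $(T^*_x\Psi)(y)=e^{-\frac{ik}{2}\omega(x,y)}\Psi(x+y)$. For a lattice $\Lambda\subset E$, $\mathcal H^\Lambda_k$ is the space of holomorphic sections $\Psi$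 of $L^k\otimes\delta$ with $T^*_x\Psi=\Psi$ for all $x\in\Lambda$, with inner product $\langle\Psi_1,\Psi_2\rangle=\int_F\langle\Psi_1,\Psi_2\rangle_\delta\,|\omega|$ ($F$ a fundamental domain of $\Lambda$). For sequences, $O(k^{-\infty})$ means $O(k^{-N})$ for every $N$. Knot state. Fix relatively prime positive integers $a,b$; $D=2ab$. Fix a basis $(\lambda,\mu)$ of $E$ with $\omega(\mu,\lambda)=4\pi$. $\mathcal H_k=\mathcal H_k^{\lambda\mathbb Z\oplus\mu\mathbb Z}$; $M=T^*_{\mu/2k}$, $L=T^*_{-\lambda/2k}$ (operators), $q=e^{i\pi/k}$, $q^{s/D}=e^{i\pi s/(kD)}$ for rational $s$. Fix $\Omega_\mu$; $(\xi_\ell)_{\ell\in\mathbb Z/2k\mathbb Z}$ is the orthonormal basis of $\mathcal H_k$ with $M\xi_\ell=q^\ell\xi_\ell$, $L\xi_\ell=\xi_{\ell-1}$, $\xi_0(0)\in\mathbb R_{>0}\Omega_\mu$. $Z^0_k=-\frac{i}{2\sqrt k}\sum_{\ell\in\mathbb Z/2k\mathbb Z}\xi_\ell$. $(\epsilon_i,p_i)_{i=1,\dots,4}$ are $(1,-a-b)$, $(-1,-a+b)$, $(1,a+b)$, $(-1,a-b)$. Second lattice. $\Omega_\lambda$ is the (fixed, $k$-independent) choice of sign with $Z^0_k(0)=\frac{e^{3i\pi/4}}{\sqrt2}(\frac{k}{2\pi})^{1/4}\Omega_\lambda+O(k^{-\infty})$. $R_D=D\mu\mathbb Z\oplus\lambda\mathbb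 Z$, $\mathcal H_{D,k}=\mathcal H_k^{R_D}\supset\mathcal H_k$ ($\dim=2kD$). $S=T^*_{-\lambda/2kD}$, $R=T^*_{(D\mu-2\lambda)/2kD}$. $(\Psi_n)_{n\in\mathbb Z/2kD\mathbb Z}$ is the orthonormal basis of $\mathcal H_{D,k}$ with $S\Psi_n=q^{n/D}\Psi_n$, $R\Psi_n=\Psi_{n+1}$ and phase such that $\Psi_0(0)=e^{i\pi/4}(\frac k{2\pi})^{1/4}\Omega_\lambda+O(k^{-\infty})$. *)

From Stdlib Require Import Reals ZArith.
Open Scope R_scope.

Record Cplx := mkC { Cre : R ; Cim : R }.
Definition C0 : Cplx := mkC 0 0.
Definition C1 : Cplx := mkC 1 0.
Definition Ci : Cplx := mkC 0 1.
Definition RtoC (r : R) : Cplx := mkC r 0.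
Definition Cadd (z w : Cplx) : Cplx := mkC (Cre z + Cre w) (Cim z + Cim w).
Definition Copp (z : Cplx) : Cplx := mkC (- Cre z) (- Cim z).
Definition Csub (z w : Cplx) : Cplx := Cadd z (Copp w).
Definition Cmul (z w : Cplx) : Cplx :=
  mkC (Cre z * Cre w - Cim z * Cim w) (Cre z * Cim w + Cim z * Cre w).
Definition Cconj (z : Cplx) : Cplx := mkC (Cre z) (- Cim z).
Definition Cnorm2 (z : Cplx) : R := Cre z * Cre z + Cim z * Cim z.
Definition Cabs (z : Cplx) : R := sqrt (Cnorm2 z).
Definition Cexpi (theta : R) : Cplx := mkC (cos theta) (sin theta).
Fixpoint Csum (n : nat) (f : nat -> Cplx) : Cplx :=
  match n with O => C0 | S m => Cadd (Csum m f) (f m) end.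

(* ---------- the symplectic plane (E, omega, j) ----------
   Every real 2-dim symplectic space with compatible complex structure is
   isomorphic to R^2 with omega((x1,x2),(y1,y2)) = x1 y2 - x2 y1 and
   j(x1,x2) = (-x2,x1)  (omega(u, j u) = |u|^2 > 0). *)
Definition E := (R * R)%type.
Definition Eadd (x y : E) : E := (fst x + fst y, snd x + snd y).
Definition Escal (r : R) (x : E) : E := (r * fst x, r * snd x).
Definition E0 : E := (0, 0).
Definition e1 : E := (1, 0).
Definition e2 : E := (0, 1).
Definition omega (x y : E) : R := fst x * snd y - snd x * fst y.
Definition jE (x : E) : E := (- snd x, fst x).
Definition Edist2 (x y : E) : R :=
  (fst x - fst y) * (fst x - fst y) + (snd x - snd y) * (snd x - snd y).

(* ---------- canonical line K_j and the half-form line delta ----------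
   K_j is identified with Cplx by  alpha |-> alpha(e1); the form with
   alpha(e1) = c is v |-> c (v1 + i v2).  Its Hermitian norm (induced by
   g = omega(., j .)) is |alpha|^2 = |alpha(e1)|^2 + |alpha(e2)|^2 = 2|c|^2.
   A half-form line delta is modelled as Cplx, with  phi : delta^2 -> K_j,
   phi(z (x) w) = kappa z w  (kappa <> 0 arbitrary: this covers every
   half-form line up to isomorphism).  The metric of delta making phi an
   isometry is  <z,w>_delta = sqrt 2 |kappa| z conj(w). *)
Definition Kval (c : Cplx) (v : E) : Cplx := Cmul c (mkC (fst v) (snd v)).
Definition phi_sq (kappa z : Cplx) (v : E) : Cplx := Kval (Cmul kappa (Cmul z z)) v.
Definition delta_inner (kappa : Cplx) (z w : Cplx) : Cplx :=
  Cmul (RtoC (sqrt 2 * Cabs kappa)) (Cmul z (Cconj w)).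
Definition is_Omega (kappa : Cplx) (v : E) (Om : Cplx) : Prop := phi_sq kappa Om v = C1.

(* ---------- sections of L^k (x) delta : functions E -> delta ---------- *)
Definition section := E -> Cplx.

Definition alpha_f (x y : E) : R := / 2 * omega x y.

Definition Tstar (k : nat) (x : E) (Psi : section) : section :=
  fun y => Cmul (Cexpi (- (INR k / 2) * omega x y)) (Psi (Eadd x y)).

Definition Cscale_sec (c : Cplx) (Psi : section) : section := fun y => Cmul c (Psi y).

Definition Ccont (f : E -> Cplx) : Prop :=
  forall x eps, 0 < eps -> exists d, 0 < d /\
    forall y, Edist2 x y < d * d -> Cnorm2 (Csub (f y) (f x)) < eps * eps.

Definition has_dderiv (f : E -> Cplx) (x v : E) (d : Cplx) : Prop :=
  derivable_pt_lim (fun t => Cre (f (Eadd x (Escal t v)))) 0 (Cre d) /\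
  derivable_pt_lim (fun t => Cim (f (Eadd x (Escal t v)))) 0 (Cim d).

(* holomorphic section of L^k (x) delta, for the holomorphic structure
   compatible with the connection d - i k alpha:  Psi is Cplx^1 and
   nabla_{e1} Psi + i nabla_{j e1} Psi = 0  (j e1 = e2),
   where nabla_v Psi = d_v Psi - i k alpha(v) Psi. *)
Definition holomorphic (k : nat) (Psi : section) : Prop :=
  exists d1 d2 : E -> Cplx, Ccont d1 /\ Ccont d2 /\
    (forall x, has_dderiv Psi x e1 (d1 x) /\ has_dderiv Psi x e2 (d2 x)) /\
    forall x,
      Cadd (Csub (d1 x) (Cmul (mkC 0 (INR k * alpha_f x e1)) (Psi x)))
           (Cmul Ci (Csub (d2 x) (Cmul (mkC 0 (INR k * alpha_f x e2)) (Psi x))))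
      = C0.

Definition inH (k : nat) (v1 v2 : E) (Psi : section) : Prop :=
  holomorphic k Psi /\
  forall m n : Z,
    forall y, Tstar k (Eadd (Escal (IZR m) v1) (Escal (IZR n) v2)) Psi y = Psi y.

Definition Int01 (g : R -> R) (v : R) : Prop :=
  exists pr : Riemann_integrable g 0 1, RiemannInt pr = v.
Definition Int01sq (h : R -> R -> R) (v : R) : Prop :=
  exists G : R -> R, (forall t, Int01 (fun s => h s t) (G t)) /\ Int01 G v.

(* <Psi1, Psi2> = int_F <Psi1,Psi2>_delta |omega|, F the fundamental domain
   {s v1 + t v2 : s,t in [0,1]} of v1 Z (+) v2 Z  *)
Definition inner_is (kappa : Cplx) (v1 v2 : E) (Psi1 Psi2 : section) (z : Cplx) : Prop :=
  let f := fun s t =>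
    Cmul (RtoC (Rabs (omega v1 v2)))
      (delta_inner kappa (Psi1 (Eadd (Escal s v1) (Escal t v2)))
                         (Psi2 (Eadd (Escal s v1) (Escal t v2)))) in
  Int01sq (fun s t => Cre (f s t)) (Cre z) /\ Int01sq (fun s t => Cim (f s t)) (Cim z).

(* an orthonormal basis (b_n), n in Z/NZ (represented as an N-periodic
   family indexed by Z), of H_k^Lambda *)
Definition is_onb (kappa : Cplx) (k : nat) (v1 v2 : E) (N : Z) (b : Z -> section) : Prop :=
  (forall n y, b (n + N)%Z y = b n y) /\
  (forall n, inH k v1 v2 (b n)) /\
  (forall n m, inner_is kappa v1 v2 (b n) (b m)
                 (if Z.eqb (n mod N) (m mod N) then C1 else C0)) /\
  (forall Psi, inH k v1 v2 Psi ->
     exists c : nat -> Cplx, forall y,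
       Psi y = Csum (Z.to_nat N) (fun l => Cmul (c l) (b (Z.of_nat l) y))).

Definition qpow (k : nat) (s : R) : Cplx := Cexpi (PI * s / INR k).

Definition op_zpow (f finv : section -> section) (n : Z) (Psi : section) : section :=
  match n with
  | Z0 => Psi
  | Zpos p => Nat.iter (Pos.to_nat p) f Psi
  | Zneg p => Nat.iter (Pos.to_nat p) finv Psi
  end.

(* (q^{-1} M)^n with M = T*_{mu/2k}; its inverse is q T*_{-mu/2k} *)
Definition qinvM_pow (k : nat) (mu : E) (n : Z) : section -> section :=
  op_zpow (fun Psi => Cscale_sec (qpow k (-1)) (Tstar k (Escal (/ (2 * INR k)) mu) Psi))
          (fun Psi => Cscale_sec (qpow k 1) (Tstar k (Escal (- / (2 * INR k)) mu) Psi))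
          n.

Definition eps_i (i : nat) : Z :=
  match i with 1%nat => 1 | 2%nat => -1 | 3%nat => 1 | _ => -1 end%Z.
Definition p_i (a b : Z) (i : nat) : Z :=
  match i with 1%nat => - a - b | 2%nat => - a + b | 3%nat => a + b | _ => a - b end%Z.

Definition Z0sec (k : nat) (xi : Z -> section) : section :=
  fun y => Cmul (mkC 0 (- / (2 * sqrt (INR k))))
                (Csum (2 * k) (fun l => xi (Z.of_nat l) y)).

Definition asym_eq (u w : nat -> Cplx) : Prop :=
  forall N : nat, exists Cst K0 : R, forall k : nat, (0 < k)%nat -> K0 <= INR k ->
    Cabs (Csub (u k) (w k)) <= Cst * / (INR k ^ N).

(** Proof idea.  [Z^0_k] is a combination of the basis [xi_l] of [H_k], hence a
    holomorphic section invariant under the sublattice [D mu Z (+) lambda Z]: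
    it lies in [H_{D,k}] and expands as [sum_{l<2kD} c_l Psi_l].  Since
    [L xi_l = xi_{l-1}], [Z^0_k] is [L]-invariant, and [L = S^D] acts on
    [Psi_l] by [q^l]; averaging over the [2k]-th roots of unity leaves only the
    terms [Psi_{2km}], [m < D].  The Heisenberg relations show that
    [q^{-1}M] maps [Psi_n] to a phase times [Psi_{n+1}], so [(q^{-1}M)^N]
    shifts each [Psi_{2km}] to [Psi_{2km+N}] with an explicit phase.  Finally,
    orthonormality identifies the coefficient of [Psi_0] with
    [alpha_0 = <Z^0_k, Psi_0>], and a direct computation gives its phase. *)

From Pilot Require Import Defs.
From Stdlib Require Import Reals ZArith Lia Lra Psatz FunctionalExtensionality.
Open Scope R_scope.

(** [Reals] also exports a constant [C1]; we mean the complex unit. *)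
Local Notation C1 := Defs.C1.

Lemma Cplx_ext (z w : Cplx) : Cre z = Cre w -> Cim z = Cim w -> z = w.
Proof. destruct z, w; simpl; intros -> ->; reflexivity. Qed.

Ltac Cring := apply Cplx_ext; simpl; ring.

Lemma Cmul_assoc (z w u : Cplx) : Cmul z (Cmul w u) = Cmul (Cmul z w) u.
Proof. Cring. Qed.
Lemma Cmul_comm (z w : Cplx) : Cmul z w = Cmul w z.
Proof. Cring. Qed.
Lemma Cmul_1_l (z : Cplx) : Cmul C1 z = z.
Proof. Cring. Qed.
Lemma Cadd_comm (z w : Cplx) : Cadd z w = Cadd w z.
Proof. Cring. Qed.

Lemma Cnorm2_mul (z w : Cplx) : Cnorm2 (Cmul z w) = Cnorm2 z * Cnorm2 w.
Proof. unfold Cnorm2; simpl; ring. Qed.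

Lemma Cnorm2_eq0 (z : Cplx) : Cnorm2 z = 0 -> z = C0.
Proof. unfold Cnorm2; intros H; apply Cplx_ext; simpl; nra. Qed.

Lemma Cmul_integral (z w : Cplx) : Cmul z w = C0 -> z = C0 \/ w = C0.
Proof.
  intros H. assert (Hn : Cnorm2 z * Cnorm2 w = 0).
  { rewrite <- Cnorm2_mul, H; unfold Cnorm2; simpl; ring. }
  destruct (Rmult_integral _ _ Hn); [left | right]; apply Cnorm2_eq0; assumption.
Qed.

Lemma RtoC_mul_cancel (r : R) (z w : Cplx) :
  r <> 0 -> Cmul (RtoC r) z = Cmul (RtoC r) w -> z = w.
Proof.
  intros Hr H. assert (E : Cmul (RtoC r) (Csub z w) = C0).
  { apply Cplx_ext; apply (f_equal Cre) in H as H1; apply (f_equal Cim) in H as H2;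
      simpl in *; lra. }
  destruct (Cmul_integral _ _ E) as [E1 | E1].
  - apply (f_equal Cre) in E1; simpl in E1; contradiction.
  - apply Cplx_ext; [apply (f_equal Cre) in E1 | apply (f_equal Cim) in E1];
      simpl in E1; lra.
Qed.

Lemma Csum_ext (n : nat) (f g : nat -> Cplx) :
  (forall l, (l < n)%nat -> f l = g l) -> Csum n f = Csum n g.
Proof. induction n; simpl; intros H; auto. rewrite IHn, H; auto. Qed.

Lemma Csum_zero (n : nat) : Csum n (fun _ => C0) = C0.
Proof. induction n; simpl; auto. rewrite IHn; Cring. Qed.

Lemma Csum_add (n : nat) (f g : nat -> Cplx) :
  Csum n (fun l => Cadd (f l) (g l)) = Cadd (Csum n f) (Csum n g).
Proof. induction n; simpl. - Cring. - rewrite IHn; Cring. Qed.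

Lemma Csum_mul_l (n : nat) (c : Cplx) (f : nat -> Cplx) :
  Cmul c (Csum n f) = Csum n (fun l => Cmul c (f l)).
Proof. induction n; simpl. - Cring. - rewrite <- IHn; Cring. Qed.

Lemma Csum_swap (n m : nat) (F : nat -> nat -> Cplx) :
  Csum n (fun j => Csum m (fun l => F j l)) = Csum m (fun l => Csum n (fun j => F j l)).
Proof. induction n; simpl. - symmetry; apply Csum_zero. - rewrite IHn, <- Csum_add; auto. Qed.

Lemma Csum_const (n : nat) (c : Cplx) : Csum n (fun _ => c) = Cmul (RtoC (INR n)) c.
Proof. induction n; simpl Csum. - Cring. - rewrite IHn, S_INR; Cring. Qed.

Lemma Csum_succ_l (n : nat) (f : nat -> Cplx) :
  Csum (S n) f = Cadd (f O) (Csum n (fun l => f (S l))).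
Proof. induction n. - simpl; Cring. - change (Csum (S (S n)) f) with (Cadd (Csum (S n) f) (f (S n))).
  rewrite IHn; simpl; Cring. Qed.

Lemma Csum_app (n p : nat) (f : nat -> Cplx) :
  Csum (n + p) f = Cadd (Csum n f) (Csum p (fun r => f (n + r)%nat)).
Proof. induction p; simpl. - rewrite Nat.add_0_r; Cring. - rewrite Nat.add_succ_r; simpl; rewrite IHp; Cring. Qed.

Lemma Csum_single (n : nat) (f : nat -> Cplx) :
  (0 < n)%nat -> (forall l, (0 < l < n)%nat -> f l = C0) -> Csum n f = f O.
Proof.
  intros Hn H. destruct n as [|n]; [lia|]. rewrite Csum_succ_l.
  rewrite (Csum_ext _ _ (fun _ => C0)), Csum_zero by (intros; apply H; lia). Cring.
Qed.

Lemma Csum_multiples (n p : nat) (f : nat -> Cplx) :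
  (0 < p)%nat -> (forall l, l mod p <> 0%nat -> f l = C0) ->
  Csum (n * p) f = Csum n (fun m => f (m * p)%nat).
Proof.
  intros Hp H. induction n as [|n IH]; [reflexivity|].
  replace (S n * p)%nat with (n * p + p)%nat by lia. rewrite Csum_app, IH. simpl.
  f_equal. rewrite (Csum_single p (fun r => f (n * p + r)%nat)), Nat.add_0_r; auto.
  intros l Hl. apply H.
  rewrite Nat.add_comm, Nat.Div0.mod_add, Nat.mod_small; lia.
Qed.

Lemma Cexpi_add (s t : R) : Cmul (Cexpi s) (Cexpi t) = Cexpi (s + t).
Proof. apply Cplx_ext; simpl; [rewrite cos_plus | rewrite sin_plus]; ring. Qed.

Lemma Cexpi_zero (s : R) : s = 0 -> Cexpi s = C1.
Proof. intros ->; apply Cplx_ext; simpl; [apply cos_0 | apply sin_0]. Qed.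

Lemma Cexpi_mul_cancel (s : R) (z w : Cplx) : Cmul (Cexpi s) z = w -> z = Cmul (Cexpi (- s)) w.
Proof. intros <-. rewrite Cmul_assoc, Cexpi_add, Cexpi_zero, Cmul_1_l by ring; reflexivity. Qed.

Lemma qpow_add (k : nat) (s t : R) : Cmul (qpow k s) (qpow k t) = qpow k (s + t).
Proof. unfold qpow; rewrite Cexpi_add; f_equal; unfold Rdiv; ring. Qed.

Lemma qpow_zero (k : nat) (s : R) : s = 0 -> qpow k s = C1.
Proof. intros ->; apply Cexpi_zero; unfold Rdiv; ring. Qed.

Lemma qpow_mul_cancel (k : nat) (s : R) (z w : Cplx) :
  Cmul (qpow k s) z = w -> z = Cmul (qpow k (- s)) w.
Proof. intros <-. rewrite Cmul_assoc, qpow_add, qpow_zero, Cmul_1_l by ring; reflexivity. Qed.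

Lemma qpow_period (k t : nat) : (0 < k)%nat -> qpow k (INR (2 * k * t)) = C1.
Proof.
  intros Hk. assert (Hk' : INR k <> 0) by (apply not_0_INR; lia).
  unfold qpow, Cexpi. replace (PI * INR (2 * k * t) / INR k) with (0 + 2 * INR t * PI)
    by (rewrite !mult_INR; simpl INR; field; auto).
  rewrite cos_period, sin_period, cos_0, sin_0; reflexivity.
Qed.

Lemma qpow_eq_1 (k l : nat) : (0 < k)%nat -> qpow k (INR l) = C1 -> (l mod (2 * k) = 0)%nat.
Proof.
  intros Hk H. assert (Hk' : INR k <> 0) by (apply not_0_INR; lia).
  unfold qpow, Cexpi in H. injection H as Hc Hs. set (th := PI * INR l / INR k) in *.
  assert (Hhalf : sin (th / 2) = 0).
  { pose proof (cos_2a_sin (th / 2)) as E. replace (2 * (th / 2)) with th in E by field. nra. }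
  destruct (sin_eq_0_0 _ Hhalf) as [K HK].
  assert (Hl : INR l = 2 * INR k * IZR K).
  { pose proof PI_RGT_0. apply (Rmult_eq_reg_l (PI / (2 * INR k))).
    - transitivity (th / 2); [unfold th; field; auto | rewrite HK; field; auto].
    - apply Rmult_integral_contrapositive_currified; [lra | apply Rinv_neq_0_compat; lra]. }
  rewrite !INR_IZR_INZ, <- !mult_IZR in Hl. apply eq_IZR in Hl.
  apply Nat2Z.inj. rewrite Nat2Z.inj_mod, Hl, Nat2Z.inj_mul, Z.mul_comm, Z.mod_mul; lia.
Qed.

Lemma geometric_telescope (k : nat) (s : R) (n : nat) :
  Cmul (qpow k s) (Csum n (fun j => qpow k (INR j * s))) =
  Cadd (Csum n (fun j => qpow k (INR j * s))) (Csub (qpow k (INR n * s)) C1).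
Proof.
  induction n as [|n IH].
  - cbn [Csum]; rewrite (qpow_zero k (INR 0 * s)) by (simpl; ring); Cring.
  - change (Csum (S n) ?f) with (Cadd (Csum n f) (f n)); cbv beta.
    transitivity (Cadd (Cmul (qpow k s) (Csum n (fun j => qpow k (INR j * s))))
                       (Cmul (qpow k s) (qpow k (INR n * s)))); [Cring|].
    rewrite IH, qpow_add, S_INR, (Rplus_comm (INR n) 1), Rmult_plus_distr_r, Rmult_1_l.
    Cring.
Qed.

Lemma geometric_roots (k l : nat) : (0 < k)%nat ->
  Csum (2 * k) (fun j => qpow k (INR j * INR l)) =
  if Nat.eqb (l mod (2 * k)) 0 then RtoC (INR (2 * k)) else C0.
Proof.
  intros Hk. destruct (Nat.eqb_spec (l mod (2 * k)) 0) as [H | H].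
  - destruct (proj1 (Nat.Div0.mod_divides l (2 * k)) H) as [t ->].
    rewrite (Csum_ext _ _ (fun _ => C1)), Csum_const by
      (intros j _; rewrite <- mult_INR, Nat.mul_comm, <- Nat.mul_assoc; apply qpow_period; auto).
    Cring.
  - pose proof (geometric_telescope k (INR l) (2 * k)) as E.
    rewrite <- mult_INR, qpow_period in E by auto.
    set (S := Csum _ _) in E.
    assert (E' : Cmul (Csub (qpow k (INR l)) C1) S = C0).
    { apply Cplx_ext; apply (f_equal Cre) in E as E1; apply (f_equal Cim) in E as E2;
        simpl in *; lra. }
    destruct (Cmul_integral _ _ E') as [E1 | E1]; [|exact E1].
    exfalso; apply H, (qpow_eq_1 k l Hk).
    apply Cplx_ext; [apply (f_equal Cre) in E1 | apply (f_equal Cim) in E1]; simpl in *; lra.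
Qed.

Lemma root_average (k d : nat) (F : nat -> Cplx) : (0 < k)%nat ->
  Csum (2 * k) (fun j => Csum (d * (2 * k)) (fun l => Cmul (qpow k (INR j * INR l)) (F l)))
  = Cmul (RtoC (INR (2 * k))) (Csum d (fun m => F (m * (2 * k))%nat)).
Proof.
  intros Hk. rewrite Csum_swap.
  rewrite (Csum_ext _ _ (fun l => if Nat.eqb (l mod (2 * k)) 0
                                  then Cmul (RtoC (INR (2 * k))) (F l) else C0)).
  2:{ intros l _.
      transitivity (Cmul (Csum (2 * k) (fun j => qpow k (INR j * INR l))) (F l)).
      - rewrite Cmul_comm, Csum_mul_l. apply Csum_ext; intros; apply Cmul_comm.
      - rewrite geometric_roots by auto. destruct Nat.eqb; Cring. }
  rewrite Csum_multiples, Csum_mul_l by (try lia; intros l Hl; apply Nat.eqb_neq in Hl; rewrite Hl; auto).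
  apply Csum_ext; intros m _. rewrite Nat.Div0.mod_mul; reflexivity.
Qed.

Lemma Tstar_ext (k : nat) (x : E) (f g : section) (z : E) :
  (forall w, f w = g w) -> Tstar k x f z = Tstar k x g z.
Proof. intros H; unfold Tstar; rewrite H; reflexivity. Qed.

Lemma Tstar_scal (k : nat) (x : E) (c : Cplx) (f : section) (z : E) :
  Tstar k x (fun w => Cmul c (f w)) z = Cmul c (Tstar k x f z).
Proof. unfold Tstar; Cring. Qed.

Lemma Tstar_Csum (k : nat) (x : E) (n : nat) (F : nat -> section) (z : E) :
  Tstar k x (fun w => Csum n (fun l => F l w)) z = Csum n (fun l => Tstar k x (F l) z).
Proof. unfold Tstar; induction n; simpl. - Cring. - rewrite <- IHn; Cring. Qed.

Lemma Tstar_comp (k : nat) (x y : E) (f : section) (z : E) :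
  Tstar k x (Tstar k y f) z = Cmul (Cexpi (- (INR k / 2) * omega y x)) (Tstar k (Eadd x y) f z).
Proof.
  unfold Tstar. rewrite !Cmul_assoc, !Cexpi_add.
  replace (Eadd y (Eadd x z)) with (Eadd (Eadd x y) z)
    by (destruct x, y, z; unfold Eadd; simpl; f_equal; ring).
  f_equal; f_equal. destruct x, y, z; unfold omega, Eadd; simpl; ring.
Qed.

Lemma Tstar_zero (k : nat) (x : E) (f : section) (z : E) : x = E0 -> Tstar k x f z = f z.
Proof.
  intros ->. unfold Tstar. rewrite Cexpi_zero by (unfold omega, E0; simpl; ring).
  rewrite Cmul_1_l. f_equal. destruct z; unfold Eadd, E0; simpl; f_equal; ring.
Qed.

Lemma Tstar_eigen_inverse (k : nat) (x x' : E) (f g : section) (s : R) (z : E) :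
  (forall y, Tstar k x f y = Cmul (qpow k s) (g y)) -> Eadd x' x = E0 ->
  Tstar k x' g z = Cmul (qpow k (- s)) (f z).
Proof.
  intros H H0. pose proof (Tstar_comp k x' x f z) as E1.
  rewrite (Tstar_zero k (Eadd x' x)), Cexpi_zero, Cmul_1_l in E1 by
    (auto; destruct x, x'; unfold Eadd, E0, omega in *; simpl in *;
     injection H0 as H1 H2; nra).
  rewrite (Tstar_ext _ _ _ _ _ H), Tstar_scal in E1. apply qpow_mul_cancel in E1; auto.
Qed.

(** ... and to its integer multiples [T*_{jx} = (T*_x)^j], since [omega(x,x) = 0]. *)
Lemma Tstar_eigen_pow (k : nat) (x : E) (f : section) (s : R) :
  (forall y, Tstar k x f y = Cmul (qpow k s) (f y)) ->
  forall (j : nat) (z : E), Tstar k (Escal (INR j) x) f z = Cmul (qpow k (INR j * s)) (f z).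
Proof.
  intros H j. induction j as [|j IH]; intros z.
  - rewrite Tstar_zero, qpow_zero, Cmul_1_l by (simpl; try ring; destruct x;
      unfold Escal, E0; simpl; f_equal; ring); reflexivity.
  - pose proof (Tstar_comp k x (Escal (INR j) x) f z) as E1.
    rewrite Cexpi_zero, Cmul_1_l in E1 by (destruct x; unfold omega, Escal; simpl; ring).
    replace (Eadd x (Escal (INR j) x)) with (Escal (INR (S j)) x) in E1
      by (rewrite S_INR; destruct x; unfold Eadd, Escal; simpl; f_equal; ring).
    rewrite <- E1, (Tstar_ext _ _ _ _ _ IH), Tstar_scal, H, Cmul_assoc, qpow_add.
    rewrite S_INR; f_equal; f_equal; ring.
Qed.

(** The total phase acquired by [(q^{-1} M)^n] on [Psi_l] is [q^{shift_phase D l n}];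
    it satisfies the cocycle rule [shift_phase_cocycle]. *)
Definition shift_phase (D l n : R) : R := - n - (2 * l * n + n * n) / D.

Lemma shift_phase_cocycle (D l n s : R) : D <> 0 ->
  shift_phase D l n + shift_phase D (l + n) s = shift_phase D l (n + s).
Proof. intros HD; unfold shift_phase; field; auto. Qed.

Definition combo (P : Z -> section) (d : nat) (be : nat -> Cplx) (ell : nat -> Z) : section :=
  fun y => Csum d (fun m => Cmul (be m) (P (ell m) y)).

Lemma combo_ext (P : Z -> section) (d : nat) (be be' : nat -> Cplx) (ell ell' : nat -> Z) :
  (forall m, (m < d)%nat -> be m = be' m) -> (forall m, ell m = ell' m) ->
  combo P d be ell = combo P d be' ell'.
Proof.
  intros H1 H2. apply functional_extensionality; intros y. unfold combo.
  apply Csum_ext; intros m Hm. rewrite H1, H2; auto.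
Qed.

Lemma Tstar_combo (k : nat) (x : E) (P : Z -> section) d be ell (z : E) :
  Tstar k x (combo P d be ell) z = Csum d (fun m => Cmul (be m) (Tstar k x (P (ell m)) z)).
Proof.
  unfold combo. rewrite (Tstar_Csum k x d (fun m w => Cmul (be m) (P (ell m) w))).
  apply Csum_ext; intros; apply Tstar_scal.
Qed.

(** A family [P] on which [S = T*_{-lambda/2kD}] acts diagonally by [q^{n/D}] and
    [R = T*_{(D mu - 2 lambda)/2kD}] shifts the index (the basis [Psi_n] of
    [H_{D,k}]).  Since [mu/2k] is the sum of the translation vectors of [R] and
    [S^{-2}], the operator [M = T*_{mu/2k}] also shifts the index, with an
    explicit phase. *)
Section ShiftBasis.

Variables (k : nat) (D : R) (lam mu : E) (P : Z -> section).
Hypothesis Hk : (0 < k)%nat.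
Hypothesis HD : D <> 0.
Hypothesis Hlm : omega mu lam = 4 * PI.
Hypothesis HS : forall n y,
  Tstar k (Escal (- / (2 * INR k * D)) lam) (P n) y = Cmul (qpow k (IZR n / D)) (P n y).
Hypothesis HR : forall n y,
  Tstar k (Escal (/ (2 * INR k * D)) (Eadd (Escal D mu) (Escal (-2) lam))) (P n) y
  = P (n + 1)%Z y.

Lemma M_on_basis (n : Z) (z : E) :
  Tstar k (Escal (/ (2 * INR k)) mu) (P n) z = Cmul (qpow k (- (1 + 2 * IZR n) / D)) (P (n + 1)%Z z).
Proof.
  assert (Hk' : INR k <> 0) by (apply not_0_INR; lia).
  set (r := / (2 * INR k * D)).
  set (xR := Escal r (Eadd (Escal D mu) (Escal (-2) lam))).
  assert (Sinv : forall w, Tstar k (Escal r lam) (P n) w = Cmul (qpow k (- (IZR n / D))) (P n w)).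
  { intros w. apply (Tstar_eigen_inverse k (Escal (- r) lam)); [apply HS|].
    destruct lam; unfold Eadd, Escal, E0; simpl; f_equal; ring. }
  pose proof (Tstar_comp k xR (Escal (INR 2) (Escal r lam)) (P n) z) as E1.
  rewrite (Tstar_ext _ _ _ _ _ (Tstar_eigen_pow _ _ _ _ Sinv 2)), Tstar_scal in E1.
  unfold xR in E1; rewrite HR in E1; fold xR in E1.
  replace (Eadd xR (Escal (INR 2) (Escal r lam))) with (Escal (/ (2 * INR k)) mu) in E1
    by (unfold xR, r; destruct lam, mu; unfold Eadd, Escal; simpl; f_equal; field; auto).
  symmetry in E1. apply Cexpi_mul_cancel in E1. rewrite E1, Cmul_assoc. f_equal.
  unfold qpow. rewrite Cexpi_add. f_equal.
  unfold xR, r. destruct lam as [l1 l2], mu as [m1 m2]. unfold omega, Eadd, Escal in *; simpl in *.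
  replace PI with ((m1 * l2 - m2 * l1) / 4) by lra. field; auto.
Qed.

Lemma Minv_on_basis (n : Z) (z : E) :
  Tstar k (Escal (- / (2 * INR k)) mu) (P n) z
  = Cmul (qpow k ((2 * IZR n - 1) / D)) (P (n - 1)%Z z).
Proof.
  assert (Hn : forall w, Tstar k (Escal (/ (2 * INR k)) mu) (P (n - 1)%Z) w =
     Cmul (qpow k (- (1 + 2 * IZR (n - 1)) / D)) (P n w)).
  { intros w. rewrite M_on_basis. do 3 f_equal. ring. }
  rewrite (Tstar_eigen_inverse _ _ _ _ _ _ z Hn).
  - rewrite minus_IZR. do 2 f_equal. unfold Rdiv; ring.
  - destruct mu; unfold Eadd, Escal, E0; simpl; f_equal; ring.
Qed.

Lemma iter_shift_combo (c : Cplx) (x : E) (s : Z) :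
  (forall n z, Cmul c (Tstar k x (P n) z)
               = Cmul (qpow k (shift_phase D (IZR n) (IZR s))) (P (n + s)%Z z)) ->
  forall (N d : nat) be ell,
  Nat.iter N (fun g => Cscale_sec c (Tstar k x g)) (combo P d be ell)
  = combo P d (fun m => Cmul (be m) (qpow k (shift_phase D (IZR (ell m)) (INR N * IZR s))))
              (fun m => (ell m + Z.of_nat N * s)%Z).
Proof.
  intros Hstep N d. induction N as [|N IH]; intros be ell.
  - apply combo_ext; intros; [|lia].
    rewrite qpow_zero by (unfold shift_phase; simpl; field; auto). Cring.
  - rewrite Nat.iter_succ, IH. apply functional_extensionality; intros y.
    unfold Cscale_sec. rewrite Tstar_combo, Csum_mul_l. unfold combo.
    apply Csum_ext; intros m _.
    rewrite Cmul_comm, <- Cmul_assoc, (Cmul_comm (Tstar _ _ _ _)), Hstep.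
    rewrite Cmul_assoc, <- (Cmul_assoc (be m)), qpow_add.
    rewrite plus_IZR, mult_IZR, <- INR_IZR_INZ, shift_phase_cocycle by auto.
    replace (ell m + Z.of_nat N * s + s)%Z with (ell m + Z.of_nat (S N) * s)%Z by lia.
    rewrite S_INR. do 4 f_equal. ring.
Qed.

Lemma qinvM_pow_combo (N : Z) (d : nat) (be : nat -> Cplx) (ell : nat -> Z) :
  qinvM_pow k mu N (combo P d be ell)
  = combo P d (fun m => Cmul (be m) (qpow k (shift_phase D (IZR (ell m)) (IZR N))))
              (fun m => (ell m + N)%Z).
Proof.
  unfold qinvM_pow, op_zpow. destruct N as [|p|p].
  - apply combo_ext; intros; [|lia].
    rewrite qpow_zero by (unfold shift_phase; field; auto). Cring.
  - rewrite (iter_shift_combo _ _ 1).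
    + apply combo_ext; intros; [|lia].
      rewrite INR_IZR_INZ, positive_nat_Z; do 3 f_equal; ring.
    + intros n z. rewrite M_on_basis, Cmul_assoc, qpow_add.
      do 2 f_equal. unfold shift_phase, Rdiv; ring.
  - rewrite (iter_shift_combo _ _ (-1)).
    + apply combo_ext; intros; [|lia].
      rewrite INR_IZR_INZ, positive_nat_Z; do 3 f_equal.
      change (Z.neg p) with (- Z.pos p)%Z; rewrite opp_IZR; ring.
    + intros n z. rewrite Minv_on_basis, Cmul_assoc, qpow_add.
      replace (n + -1)%Z with (n - 1)%Z by lia.
      do 2 f_equal. unfold shift_phase, Rdiv; ring.
Qed.

End ShiftBasis.

Lemma Cnorm2_nonneg (z : Cplx) : 0 <= Cnorm2 z.
Proof. unfold Cnorm2; nra. Qed.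

Lemma Cnorm2_add_le (z w : Cplx) : Cnorm2 (Cadd z w) <= 2 * (Cnorm2 z + Cnorm2 w).
Proof.
  unfold Cnorm2; simpl.
  pose proof (Rle_0_sqr (Cre z - Cre w)); pose proof (Rle_0_sqr (Cim z - Cim w)).
  unfold Rsqr in *; nra.
Qed.

Lemma Ccont_lin (c : Cplx) (f g : E -> Cplx) :
  Ccont f -> Ccont g -> Ccont (fun y => Cadd (Cmul c (f y)) (g y)).
Proof.
  intros Hf Hg x eps He. set (M := Cnorm2 c + 1).
  assert (HM : 1 <= M) by (pose proof (Cnorm2_nonneg c); unfold M; lra).
  destruct (Hf x (eps / (2 * M))) as [d1 [Hd1 H1]]; [apply Rdiv_lt_0_compat; lra|].
  destruct (Hg x (eps / 2)) as [d2 [Hd2 H2]]; [lra|].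
  exists (Rmin d1 d2). split; [apply Rmin_pos; auto|]. intros y Hy.
  pose proof (Rmin_l d1 d2); pose proof (Rmin_r d1 d2); pose proof (Rmin_pos d1 d2 Hd1 Hd2).
  assert (Hy1 : Edist2 x y < d1 * d1) by nra. assert (Hy2 : Edist2 x y < d2 * d2) by nra.
  specialize (H1 y Hy1); specialize (H2 y Hy2).
  replace (Csub (Cadd (Cmul c (f y)) (g y)) (Cadd (Cmul c (f x)) (g x)))
    with (Cadd (Cmul c (Csub (f y) (f x))) (Csub (g y) (g x))) by Cring.
  eapply Rle_lt_trans; [apply Cnorm2_add_le|]. rewrite Cnorm2_mul.
  assert (Hc : Cnorm2 c * Cnorm2 (Csub (f y) (f x)) <= M * (eps / (2 * M) * (eps / (2 * M)))).
  { pose proof (Cnorm2_nonneg c); pose proof (Cnorm2_nonneg (Csub (f y) (f x))).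
    apply Rmult_le_compat; [lra | lra | unfold M; lra | lra]. }
  assert (HMe : M * (eps / (2 * M) * (eps / (2 * M))) <= eps * eps / 4).
  { replace (M * (eps / (2 * M) * (eps / (2 * M)))) with (eps * eps / 4 * / M) by (field; lra).
    pose proof (Rinv_le_contravar 1 M ltac:(lra) HM). rewrite Rinv_1 in *. nra. }
  nra.
Qed.

Lemma derivable_pt_lim_lincomb (f g h : R -> R) (x l1 l2 l3 a b : R) :
  derivable_pt_lim f x l1 -> derivable_pt_lim g x l2 -> derivable_pt_lim h x l3 ->
  derivable_pt_lim (fun t => a * f t + b * g t + h t) x (a * l1 + b * l2 + l3).
Proof.
  intros H1 H2 H3.
  exact (derivable_pt_lim_plus _ _ _ _ _ (derivable_pt_lim_plus _ _ _ _ _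
     (derivable_pt_lim_scal f a x l1 H1) (derivable_pt_lim_scal g b x l2 H2)) H3).
Qed.

Lemma has_dderiv_lin (c : Cplx) (f g : E -> Cplx) (x v : E) (d1 d2 : Cplx) :
  has_dderiv f x v d1 -> has_dderiv g x v d2 ->
  has_dderiv (fun y => Cadd (Cmul c (f y)) (g y)) x v (Cadd (Cmul c d1) d2).
Proof.
  intros [Hre1 Him1] [Hre2 Him2]. split.
  - pose proof (derivable_pt_lim_lincomb _ _ _ _ _ _ _ (Cre c) (- Cim c) Hre1 Him1 Hre2) as H.
    simpl. replace (Cre c * Cre d1 - Cim c * Cim d1 + Cre d2)
      with (Cre c * Cre d1 + - Cim c * Cim d1 + Cre d2) by ring.
    eapply derivable_pt_lim_ext; [|exact H]. intros t; simpl; ring.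
  - pose proof (derivable_pt_lim_lincomb _ _ _ _ _ _ _ (Cre c) (Cim c) Him1 Hre1 Him2) as H.
    simpl. replace (Cre c * Cim d1 + Cim c * Cre d1 + Cim d2)
      with (Cre c * Cim d1 + Cim c * Cre d1 + Cim d2) by ring.
    eapply derivable_pt_lim_ext; [|exact H]. intros t; simpl; ring.
Qed.

Definition cr_operator (k : nat) (Psi d1 d2 : E -> Cplx) (x : E) : Cplx :=
  Cadd (Csub (d1 x) (Cmul (mkC 0 (INR k * alpha_f x e1)) (Psi x)))
       (Cmul Ci (Csub (d2 x) (Cmul (mkC 0 (INR k * alpha_f x e2)) (Psi x)))).

Lemma cr_operator_lin (k : nat) (c : Cplx) (f g f1 f2 g1 g2 : E -> Cplx) (x : E) :
  cr_operator k (fun y => Cadd (Cmul c (f y)) (g y))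
    (fun y => Cadd (Cmul c (f1 y)) (g1 y)) (fun y => Cadd (Cmul c (f2 y)) (g2 y)) x
  = Cadd (Cmul c (cr_operator k f f1 f2 x)) (cr_operator k g g1 g2 x).
Proof. unfold cr_operator; Cring. Qed.

Lemma holomorphic_zero (k : nat) : holomorphic k (fun _ => C0).
Proof.
  exists (fun _ => C0), (fun _ => C0).
  assert (Hc : Ccont (fun _ : E => C0)).
  { intros x eps He. exists 1. split; [lra|]. intros. unfold Cnorm2; simpl; nra. }
  split; [exact Hc | split; [exact Hc | split]].
  - intros x; split; split; simpl; apply (derivable_pt_lim_const 0 0).
  - intros x. apply Cplx_ext; simpl; ring.
Qed.

Lemma holomorphic_lin (k : nat) (c : Cplx) (f g : section) :
  holomorphic k f -> holomorphic k g -> holomorphic k (fun y => Cadd (Cmul c (f y)) (g y)).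
Proof.
  intros [f1 [f2 [Cf1 [Cf2 [Df Ef]]]]] [g1 [g2 [Cg1 [Cg2 [Dg Eg]]]]].
  exists (fun x => Cadd (Cmul c (f1 x)) (g1 x)), (fun x => Cadd (Cmul c (f2 x)) (g2 x)).
  split; [apply Ccont_lin; auto | split; [apply Ccont_lin; auto | split]].
  - intros x; destruct (Df x), (Dg x); split; apply has_dderiv_lin; auto.
  - intros x. change (cr_operator k (fun y => Cadd (Cmul c (f y)) (g y))
      (fun x => Cadd (Cmul c (f1 x)) (g1 x)) (fun x => Cadd (Cmul c (f2 x)) (g2 x)) x = C0).
    rewrite cr_operator_lin. unfold cr_operator. rewrite Ef, Eg. Cring.
Qed.

Lemma holomorphic_scal (k : nat) (c : Cplx) (f : section) :
  holomorphic k f -> holomorphic k (fun y => Cmul c (f y)).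
Proof.
  intros H. replace (fun y => Cmul c (f y)) with (fun y => Cadd (Cmul c (f y)) C0)
    by (apply functional_extensionality; intros; Cring).
  apply holomorphic_lin; auto using holomorphic_zero.
Qed.

Lemma holomorphic_Csum (k n : nat) (F : nat -> section) :
  (forall l, (l < n)%nat -> holomorphic k (F l)) -> holomorphic k (fun y => Csum n (fun l => F l y)).
Proof.
  induction n as [|n IH]; intros H; simpl; [apply holomorphic_zero|].
  replace (fun y => Cadd (Csum n (fun l => F l y)) (F n y))
    with (fun y => Cadd (Cmul C1 (Csum n (fun l => F l y))) (F n y))
    by (apply functional_extensionality; intros; rewrite Cmul_1_l; auto).
  apply holomorphic_lin; auto.
Qed.

Lemma Int01_lin (f g : R -> R) (v w l : R) :
  Int01 f v -> Int01 g w -> Int01 (fun x => f x + l * g x) (v + l * w).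
Proof.
  intros [p1 H1] [p2 H2]. exists (RiemannInt_P10 l p1 p2).
  etransitivity; [apply (RiemannInt_P13 p1 p2) | rewrite H1, H2; reflexivity].
Qed.

Lemma Int01_zero : Int01 (fun _ => 0) 0.
Proof. exists (RiemannInt_P14 0 1 0). etransitivity; [apply RiemannInt_P15 | ring]. Qed.

Lemma Int01sq_lin (f g : R -> R -> R) (v w l : R) :
  Int01sq f v -> Int01sq g w -> Int01sq (fun s t => f s t + l * g s t) (v + l * w).
Proof.
  intros [G1 [H1 K1]] [G2 [H2 K2]]. exists (fun t => G1 t + l * G2 t).
  split; [intros t; apply Int01_lin | apply Int01_lin]; auto.
Qed.

Lemma Int01sq_ext (f g : R -> R -> R) (v v' : R) :
  (forall s t, f s t = g s t) -> v = v' -> Int01sq f v -> Int01sq g v'.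
Proof.
  intros H <-. replace g with f; auto.
  do 2 (apply functional_extensionality; intros); auto.
Qed.

Lemma inner_zero (kappa : Cplx) (v1 v2 : E) (g : section) : inner_is kappa v1 v2 (fun _ => C0) g C0.
Proof.
  split; (eapply Int01sq_ext; [| | exists (fun _ => 0); split; [intros; apply Int01_zero | apply Int01_zero]]);
    intros; simpl; ring.
Qed.

Lemma inner_lin (kappa c : Cplx) (v1 v2 : E) (f h g : section) (z1 z2 : Cplx) :
  inner_is kappa v1 v2 f g z1 -> inner_is kappa v1 v2 h g z2 ->
  inner_is kappa v1 v2 (fun y => Cadd (Cmul c (f y)) (h y)) g (Cadd (Cmul c z1) z2).
Proof.
  intros [Af Bf] [Ah Bh]. split.
  - pose proof (Int01sq_lin _ _ _ _ (- Cim c) (Int01sq_lin _ _ _ _ (Cre c) Ah Af) Bf) as H.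
    eapply Int01sq_ext; [| | exact H]; intros; simpl; ring.
  - pose proof (Int01sq_lin _ _ _ _ (Cim c) (Int01sq_lin _ _ _ _ (Cre c) Bh Bf) Af) as H.
    eapply Int01sq_ext; [| | exact H]; intros; simpl; ring.
Qed.

Lemma inner_combo (kappa : Cplx) (v1 v2 : E) (P : Z -> section) (d : nat)
  (be : nat -> Cplx) (ell : nat -> Z) (g : section) (z : nat -> Cplx) :
  (forall m, (m < d)%nat -> inner_is kappa v1 v2 (P (ell m)) g (z m)) ->
  inner_is kappa v1 v2 (combo P d be ell) g (Csum d (fun m => Cmul (be m) (z m))).
Proof.
  unfold combo. induction d as [|d IH]; intros H; simpl; [apply inner_zero|].
  pose proof (inner_lin kappa (be d) v1 v2 _ _ g _ _ (H d ltac:(lia)) (IH ltac:(auto))) as Hl.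
  replace (fun y => Cadd (Csum d (fun m => Cmul (be m) (P (ell m) y))) (Cmul (be d) (P (ell d) y)))
    with (fun y => Cadd (Cmul (be d) (P (ell d) y)) (Csum d (fun m => Cmul (be m) (P (ell m) y))))
    by (apply functional_extensionality; intros; apply Cadd_comm).
  rewrite Cadd_comm. exact Hl.
Qed.

Lemma Z0sec_in_sublattice (k : nat) (lam mu : E) (xi : Z -> section) (Dz : Z) :
  (forall l, inH k lam mu (xi l)) -> inH k (Escal (IZR Dz) mu) lam (Z0sec k xi).
Proof.
  intros Hxi. split.
  - apply holomorphic_scal, holomorphic_Csum. intros l _. apply Hxi.
  - intros m n y. unfold Z0sec. rewrite Tstar_scal, Tstar_Csum. f_equal.
    apply Csum_ext; intros l _.
    replace (Eadd (Escal (IZR m) (Escal (IZR Dz) mu)) (Escal (IZR n) lam))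
      with (Eadd (Escal (IZR n) lam) (Escal (IZR (m * Dz)) mu))
      by (rewrite mult_IZR; destruct lam, mu; unfold Eadd, Escal; simpl; f_equal; ring).
    apply Hxi.
Qed.

Lemma Z0sec_L_invariant (k : nat) (lam : E) (xi : Z -> section) : (0 < k)%nat ->
  (forall l y, xi (l + 2 * Z.of_nat k)%Z y = xi l y) ->
  (forall l y, Tstar k (Escal (- / (2 * INR k)) lam) (xi l) y = xi (l - 1)%Z y) ->
  forall y, Tstar k (Escal (- / (2 * INR k)) lam) (Z0sec k xi) y = Z0sec k xi y.
Proof.
  intros Hk Hper HL y. unfold Z0sec. rewrite Tstar_scal, Tstar_Csum. f_equal.
  rewrite (Csum_ext _ _ (fun l => xi (Z.of_nat l - 1)%Z y)) by (intros; apply HL).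
  replace (2 * k)%nat with (S (2 * k - 1)) by lia.
  rewrite Csum_succ_l. change (Csum (S ?n) ?f) with (Cadd (Csum n f) (f n)).
  rewrite Cadd_comm. f_equal.
  - apply Csum_ext; intros. f_equal. lia.
  - rewrite <- (Hper (Z.of_nat 0 - 1)%Z y). f_equal. lia.
Qed.

(** Fourier filtering: if [f = sum_{l < 2kD} c_l P_l] in a basis on which
    [S = T*_{-lambda/2kD}] acts by [q^{l/D}], and [f] is invariant under
    [L = T*_{-lambda/2k} = S^D], then averaging [f = L^j f] over [j < 2k]
    kills every [P_l] with [2k] not dividing [l]. *)
Lemma L_invariant_filter (k d : nat) (lam : E) (P : Z -> section) (f : section) (c : nat -> Cplx) :
  (0 < k)%nat -> (0 < d)%nat ->
  (forall n y, Tstar k (Escal (- / (2 * INR k * INR d)) lam) (P n) y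
               = Cmul (qpow k (IZR n / INR d)) (P n y)) ->
  (forall y, Tstar k (Escal (- / (2 * INR k)) lam) f y = f y) ->
  (forall y, f y = combo P (d * (2 * k)) c (fun l => Z.of_nat l) y) ->
  f = combo P d (fun m => c (m * (2 * k))%nat) (fun m => Z.of_nat (m * (2 * k))).
Proof.
  intros Hk Hd HS HL Hf.
  assert (Hk' : INR k <> 0) by (apply not_0_INR; lia).
  assert (Hd' : INR d <> 0) by (apply not_0_INR; lia).
  assert (Hpow : forall (j : nat) y, f y =
    Csum (d * (2 * k)) (fun l => Cmul (qpow k (INR j * INR l)) (Cmul (c l) (P (Z.of_nat l) y)))).
  { intros j y.
    assert (HL0 : forall y, Tstar k (Escal (- / (2 * INR k)) lam) f y = Cmul (qpow k 0) (f y))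
      by (intros; rewrite qpow_zero, Cmul_1_l; auto).
    rewrite <- (Cmul_1_l (f y)), <- (qpow_zero k (INR j * 0)), <- (Tstar_eigen_pow _ _ _ _ HL0)
      by ring.
    rewrite (Tstar_ext _ _ _ _ _ Hf), Tstar_combo. apply Csum_ext; intros l _.
    replace (Escal (INR j) (Escal (- / (2 * INR k)) lam))
      with (Escal (INR (j * d)) (Escal (- / (2 * INR k * INR d)) lam))
      by (rewrite mult_INR; destruct lam; unfold Escal; simpl; f_equal; field; auto).
    rewrite (Tstar_eigen_pow _ _ _ _ (HS (Z.of_nat l))), <- INR_IZR_INZ, mult_INR.
    rewrite !Cmul_assoc, (Cmul_comm (c l)). do 3 f_equal. field; auto. }
  apply functional_extensionality; intros y.
  apply (RtoC_mul_cancel (INR (2 * k))); [apply not_0_INR; lia|].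
  rewrite <- Csum_const, (Csum_ext _ _ _ (fun j _ => Hpow j y)), root_average by auto.
  unfold combo; reflexivity.
Qed.

Lemma inner_combo_first (kappa : Cplx) (v1 v2 : E) (k d : nat) (P : Z -> section) (be : nat -> Cplx) :
  (0 < k)%nat -> (0 < d)%nat ->
  (forall n m, inner_is kappa v1 v2 (P n) (P m)
     (if Z.eqb (n mod (2 * Z.of_nat k * Z.of_nat d)) (m mod (2 * Z.of_nat k * Z.of_nat d))
      then C1 else C0)) ->
  inner_is kappa v1 v2 (combo P d be (fun m => Z.of_nat (m * (2 * k)))) (P 0%Z) (be O).
Proof.
  intros Hk Hd Horth.
  replace (be O) with (Csum d (fun m => Cmul (be m)
    (if Z.eqb (Z.of_nat (m * (2 * k)) mod (2 * Z.of_nat k * Z.of_nat d))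
              (0 mod (2 * Z.of_nat k * Z.of_nat d)) then C1 else C0))).
  - apply inner_combo; intros; apply Horth.
  - rewrite Csum_single; [simpl; Cring | exact Hd |].
    intros m Hm. rewrite Z.mod_0_l, Z.mod_small by nia.
    destruct (Z.eqb_spec (Z.of_nat (m * (2 * k))) 0); [lia | Cring].
Qed.

Lemma knot_state_expansion (k : nat) (Dz : Z) (lam mu : E) (xi P : Z -> section) :
  (0 < k)%nat -> (0 < Dz)%Z ->
  (forall l, inH k lam mu (xi l)) ->
  (forall l y, xi (l + 2 * Z.of_nat k)%Z y = xi l y) ->
  (forall l y, Tstar k (Escal (- / (2 * INR k)) lam) (xi l) y = xi (l - 1)%Z y) ->
  (forall n y, Tstar k (Escal (- / (2 * INR k * IZR Dz)) lam) (P n) y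
               = Cmul (qpow k (IZR n / IZR Dz)) (P n y)) ->
  (forall f, inH k (Escal (IZR Dz) mu) lam f -> exists c : nat -> Cplx, forall y,
     f y = Csum (Z.to_nat (2 * Z.of_nat k * Dz)) (fun l => Cmul (c l) (P (Z.of_nat l) y))) ->
  exists be : nat -> Cplx,
    Z0sec k xi = combo P (Z.to_nat Dz) be (fun m => Z.of_nat (m * (2 * k))).
Proof.
  intros Hk HDz Xin Xper HL HS Pcomp.
  assert (HdZ : Z.of_nat (Z.to_nat Dz) = Dz) by lia.
  destruct (Pcomp _ (Z0sec_in_sublattice k lam mu xi Dz Xin)) as [c Hc].
  exists (fun m => c (m * (2 * k))%nat).
  apply (L_invariant_filter k _ lam); [auto | lia | | apply Z0sec_L_invariant; auto |].
  - intros n y. rewrite (INR_IZR_INZ (Z.to_nat Dz)), HdZ. apply HS.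
  - intros y; rewrite Hc; unfold combo. f_equal. lia.
Qed.

Lemma phase_identity (a b : Z) (i : nat) : (0 < a)%Z -> (0 < b)%Z -> (1 <= i <= 4)%nat ->
  IZR (eps_i i) + shift_phase (IZR (2 * a * b)) 0 (IZR (- (a * b) + p_i a b i))
  = - (IZR (a * a + b * b) / IZR (2 * a * b)) + IZR (2 * a * b) / 4.
Proof.
  intros Ha Hb Hi.
  assert (Ha' : IZR a <> 0) by (apply not_0_IZR; lia).
  assert (Hb' : IZR b <> 0) by (apply not_0_IZR; lia).
  unfold shift_phase. destruct i as [|[|[|[|[|i]]]]]; try lia; cbn [eps_i p_i];
  repeat first [rewrite minus_IZR | rewrite plus_IZR | rewrite opp_IZR | rewrite mult_IZR];
  field; auto.
Qed.

Theorem mainTheorem6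
  (a b : Z) (lam mu : E) (kappa Om_mu Om_lam : Cplx)
  (xi : nat -> Z -> section) (Psi : nat -> Z -> section)
  (* a, b relatively prime positive integers, D = 2ab *)
  (Ha : (0 < a)%Z) (Hb : (0 < b)%Z) (Hab : Z.gcd a b = 1%Z)
  (* basis (lambda, mu) of E with omega(mu, lambda) = 4 pi *)
  (Hlm : omega mu lam = 4 * PI)
  (* the half-form line *)
  (Hkappa : kappa <> C0)
  (* Omega_mu fixed *)
  (HOm_mu : is_Omega kappa mu Om_mu)
  (* (xi_l) : the orthonormal basis of H_k with M xi_l = q^l xi_l,
     L xi_l = xi_{l-1}, xi_0(0) in R_{>0} Omega_mu *)
  (Hxi_onb : forall k : nat, (0 < k)%nat ->
     is_onb kappa k lam mu (2 * Z.of_nat k) (xi k))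
  (Hxi_M : forall (k : nat) (l : Z) (y : E), (0 < k)%nat ->
     Tstar k (Escal (/ (2 * INR k)) mu) (xi k l) y
       = Cmul (qpow k (IZR l)) (xi k l y))
  (Hxi_L : forall (k : nat) (l : Z) (y : E), (0 < k)%nat ->
     Tstar k (Escal (- / (2 * INR k)) lam) (xi k l) y = xi k (l - 1)%Z y)
  (Hxi_0 : forall k : nat, (0 < k)%nat ->
     exists r : R, 0 < r /\ xi k 0%Z E0 = Cmul (RtoC r) Om_mu)
  (* Omega_lambda : the k-independent sign with
     Z^0_k(0) = e^{3 i pi/4}/sqrt 2 (k/2pi)^{1/4} Omega_lambda + O(k^-oo) *)
  (HOm_lam : is_Omega kappa lam Om_lam)
  (HZ0 : asym_eq (fun k => Z0sec k (xi k) E0)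
     (fun k => Cmul (Cmul (Cexpi (3 * PI / 4)) (RtoC (/ sqrt 2 * Rpower (INR k / (2 * PI)) (/ 4))))
                    Om_lam))
  (* (Psi_n) : the orthonormal basis of H_{D,k} (lattice D mu Z (+) lambda Z)
     with S Psi_n = q^{n/D} Psi_n, R Psi_n = Psi_{n+1},
     Psi_0(0) = e^{i pi/4} (k/2pi)^{1/4} Omega_lambda + O(k^-oo) *)
  (HPsi_onb : forall k : nat, (0 < k)%nat ->
     is_onb kappa k (Escal (IZR (2 * a * b)) mu) lam
            (2 * Z.of_nat k * (2 * a * b)) (Psi k))
  (HPsi_S : forall (k : nat) (n : Z) (y : E), (0 < k)%nat ->
     Tstar k (Escal (- / (2 * INR k * IZR (2 * a * b))) lam) (Psi k n) y
       = Cmul (qpow k (IZR n / IZR (2 * a * b))) (Psi k n y))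
  (HPsi_R : forall (k : nat) (n : Z) (y : E), (0 < k)%nat ->
     Tstar k (Escal (/ (2 * INR k * IZR (2 * a * b)))
                    (Eadd (Escal (IZR (2 * a * b)) mu) (Escal (-2) lam))) (Psi k n) y
       = Psi k (n + 1)%Z y)
  (HPsi_0 : asym_eq (fun k => Psi k 0%Z E0)
     (fun k => Cmul (Cmul (Cexpi (PI / 4)) (RtoC (Rpower (INR k / (2 * PI)) (/ 4))))
                    Om_lam)) :
  forall (i k : nat), (1 <= i <= 4)%nat -> (0 < k)%nat ->
    exists alpha : nat -> Cplx,
      (forall y : E,
         Cmul (qpow k (IZR (eps_i i)))
              (qinvM_pow k mu (- (a * b) + p_i a b i)%Z (Z0sec k (xi k)) y)
         = Csum (Z.to_nat (2 * a * b))
             (fun m => Cmul (alpha m)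
                (Psi k (2 * Z.of_nat k * Z.of_nat m - a * b + p_i a b i)%Z y))) /\
      exists alpha0 : Cplx,
        inner_is kappa (Escal (IZR (2 * a * b)) mu) lam (Z0sec k (xi k)) (Psi k 0%Z) alpha0 /\
        alpha 0%nat = Cmul alpha0
          (qpow k (- (IZR (a * a + b * b) / IZR (2 * a * b)) + IZR (2 * a * b) / 4)).
Proof.
  intros i k Hi Hk.
  set (D := (2 * a * b)%Z) in *.
  assert (HD : (0 < D)%Z) by (unfold D; lia).
  destruct (Hxi_onb k Hk) as [Xper [Xin _]].
  destruct (HPsi_onb k Hk) as [_ [_ [Porth Pcomp]]].
  destruct (knot_state_expansion k D lam mu (xi k) (Psi k)) as [be HZ]; auto.
  set (N := (- (a * b) + p_i a b i)%Z).
  exists (fun m => Cmul (qpow k (IZR (eps_i i)))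
    (Cmul (be m) (qpow k (shift_phase (IZR D) (IZR (Z.of_nat (m * (2 * k)))) (IZR N))))).
  split.
  -
    intros y. rewrite HZ, (qinvM_pow_combo k (IZR D) lam mu (Psi k)) by
      (auto; try (apply not_0_IZR; lia); intros; apply HPsi_S || apply HPsi_R; auto).
    unfold combo. rewrite Csum_mul_l. apply Csum_ext; intros m _.
    rewrite !Cmul_assoc. do 2 f_equal. unfold N. lia.
  -
    exists (be O). split.
    + rewrite HZ. apply inner_combo_first; [auto | lia |].
      rewrite Z2Nat.id by lia. exact Porth.
    + rewrite (Cmul_comm (qpow k _)), <- Cmul_assoc, qpow_add. do 2 f_equal.
      rewrite Rplus_comm. apply phase_identity; auto.
Qed.
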